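(* There exists a constant $C>0$ such that for all $\theta>0$ and all real $\delta$ with $|\delta|\le\theta/3$, \[\Big|f(\theta+\delta)-f(\theta)-\delta f'(\theta)-\frac{\delta^2}{2}f''(\theta)\Big|\le C\,\theta^{-2}|\delta|^3e^{-\theta},\qquad \big|j(\theta+\delta)-j(\theta)-\delta j'(\theta)\big|\le C\,\theta^{-2}\delta^2e^{-\theta}.\]
   Context: Define $\lambda:[0,\infty)\to(0,1/4]$ by $\lambda(0)=1/4$ and, for $\theta>0$, $\lambda(\theta)$ is the unique $\lambda\in(0,1/4)$ with $-1+\frac{\operatorname{artanh}(\sqrt{1-4\lambda})}{\sqrt{1-4\lambda}}=\theta$. For $\theta>0$ set $f(\theta)=-\ln\lambda(\theta)-2\theta-\theta\ln(1-4\lambda(\theta))$ and $j(\theta)=-\tfrac12\ln(1-4(\theta+1)\lambda(\theta))+\tfrac12\ln 2$. *)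

From Stdlib Require Import Reals ClassicalEpsilon.
From Coquelicot Require Import Coquelicot.
Open Scope R_scope.

Definition artanh (x : R) : R := / 2 * ln ((1 + x) / (1 - x)).

Definition lam_spec (theta l : R) : Prop :=
  0 < l < / 4 /\ -1 + artanh (sqrt (1 - 4 * l)) / sqrt (1 - 4 * l) = theta.

(* lambda(0) = 1/4; for theta > 0 the unique l in (0,1/4) with the relation
   (chosen by Hilbert epsilon; uniqueness is part of the paper's claim).
   Values at theta < 0 are irrelevant. *)
Definition lam (theta : R) : R :=
  match Rle_dec theta 0 with
  | left _ => / 4
  | right _ => epsilon (inhabits 0) (lam_spec theta)
  end.

Definition ff (theta : R) : R :=
  - ln (lam theta) - 2 * theta - theta * ln (1 - 4 * lam theta).

Definition jj (theta : R) : R :=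
  - / 2 * ln (1 - 4 * (theta + 1) * lam theta) + / 2 * ln 2.

(* Parametrize theta > 0 by t > 0 through theta = t coth t - 1.  Then
   lambda(theta) = 1 / (4 cosh^2 t), f'(theta) = -2 ln tanh t, and every further
   theta-derivative of f or j is the t-derivative divided by
   dtheta/dt = (sinh t cosh t - t) / sinh^2 t, so the third derivative of f and the
   second derivative of j are explicit functions of t.  Elementary bounds on their
   numerators, obtained by monotonicity from t = 0, show that theta^2 times either
   of them is O(e^(-3t/2)) uniformly in t > 0.  Since t >= theta, both are then
   O(theta^-2 e^-theta) at every point within theta/3 of theta, and the estimates
   follow from Taylor's formula, here obtained by iterating the mean value
   theorem. *)

From Stdlib Require Import Reals Lra Psatz Ranalysis5 ClassicalEpsilon.
From Coquelicot Require Import Coquelicot.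
Open Scope R_scope.

(** * Mean value estimates *)

Lemma continuity_pt_of_is_derive (f : R -> R) x l : is_derive f x l -> continuity_pt f x.
Proof.
  intros Hf. apply continuity_pt_filterlim.
  apply (ex_derive_continuous (V := R_NormedModule)). now exists l.
Qed.

Lemma nonneg_of_is_derive_nonneg (h h' : R -> R) b : 0 <= b -> h 0 = 0 ->
  (forall x, 0 <= x <= b -> is_derive h x (h' x)) ->
  (forall x, 0 <= x <= b -> 0 <= h' x) -> 0 <= h b.
Proof.
  intros Hb H0 Hd Hpos.
  destruct (MVT_gen h 0 b h') as [c [Hc Heq]]; cbv zeta in *;
    rewrite ?Rmin_left, ?Rmax_right in * by lra.
  - intros x Hx; apply Hd; lra.
  - intros x Hx; apply (continuity_pt_of_is_derive _ _ (h' x)), Hd; lra.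
  - assert (0 <= h' c * (b - 0)) by (apply Rmult_le_pos; [apply Hpos|]; lra). lra.
Qed.

Lemma is_derive_ext_pos (f g : R -> R) x l : 0 < x ->
  (forall y, 0 < y -> f y = g y) -> is_derive f x l -> is_derive g x l.
Proof.
  intros Hx Hfg. apply is_derive_ext_loc.
  apply (filter_imp (fun y => 0 < y)); [exact Hfg | exact (open_gt 0 x Hx)].
Qed.

Lemma is_derive_Derive_pos (f g : R -> R) x l : 0 < x ->
  (forall y, 0 < y -> is_derive f y (g y)) -> is_derive g x l -> is_derive (Derive f) x l.
Proof.
  intros Hx Hf. apply is_derive_ext_pos; auto.
  intros y Hy. symmetry. now apply is_derive_unique, Hf.
Qed.

Lemma mvt_pow_bound (h h' : R -> R) a r K n : 0 <= K ->
  (forall x, Rabs (x - a) <= r ->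
     is_derive h x (h' x) /\ Rabs (h' x) <= K * Rabs (x - a) ^ n) ->
  forall y, Rabs (y - a) <= r -> Rabs (h y - h a) <= K * Rabs (y - a) ^ S n.
Proof.
  intros HK Hh y Hy.
  destruct (MVT_cor4 h h' a r (fun x Hx => proj1 (Hh x Hx)) y Hy) as [c [Heq Hc]].
  assert (Hc' : Rabs (h' c) <= K * Rabs (y - a) ^ n).
  { apply Rle_trans with (K * Rabs (c - a) ^ n); [apply Hh; lra|].
    apply Rmult_le_compat_l; auto. apply pow_incr; split; [apply Rabs_pos | auto]. }
  rewrite Heq, Rabs_mult, <- tech_pow_Rmult.
  apply Rle_trans with (K * Rabs (y - a) ^ n * Rabs (y - a)); [|right; ring].
  apply Rmult_le_compat_r; [apply Rabs_pos | auto].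
Qed.

Lemma is_derive_sub_linear (g : R -> R) g' a c x : is_derive g x g' ->
  is_derive (fun y => g y - (y - a) * c) x (g' - c).
Proof.
  intros Hg. apply (is_derive_minus g (fun y => (y - a) * c)); [exact Hg|].
  auto_derive; [exact I | ring].
Qed.

Lemma is_derive_sub_quadratic (g : R -> R) g' a c1 c2 x : is_derive g x g' ->
  is_derive (fun y => g y - (y - a) * c1 - (y - a) ^ 2 / 2 * c2) x (g' - c1 - (x - a) * c2).
Proof.
  intros Hg. apply (is_derive_minus _ (fun y => (y - a) ^ 2 / 2 * c2)).
  - now apply is_derive_sub_linear.
  - auto_derive; [exact I | field].
Qed.

Lemma taylor1_bound (g g2 : R -> R) a r M :
  (forall x, Rabs (x - a) <= r ->
     is_derive g x (Derive g x) /\ is_derive (Derive g) x (g2 x) /\ Rabs (g2 x) <= M) ->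
  forall d, Rabs d <= r -> Rabs (g (a + d) - g a - d * Derive g a) <= M * d ^ 2.
Proof.
  intros Hg d Hd.
  assert (Ha : Rabs (a - a) <= r) by (rewrite Rminus_diag, Rabs_R0; generalize (Rabs_pos d); lra).
  assert (HM : 0 <= M)
    by (destruct (Hg a Ha) as (_ & _ & H); generalize (Rabs_pos (g2 a)); lra).
  assert (H1 := mvt_pow_bound (Derive g) g2 a r M 0 HM).
  assert (H0 := mvt_pow_bound (fun y => g y - (y - a) * Derive g a)
                  (fun y => Derive g y - Derive g a) a r M 1 HM).
  remember (a + d) as y eqn:Hy. replace d with (y - a) in * by lra.
  rewrite <- pow2_abs.
  replace (g y - g a - (y - a) * Derive g a)
    with (g y - (y - a) * Derive g a - (g a - (a - a) * Derive g a)) by ring.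
  apply H0; auto.
  intros x Hx. split.
  - now apply is_derive_sub_linear, Hg.
  - apply H1; auto. intros z Hz. destruct (Hg z Hz) as (_ & Hd2 & Hb).
    rewrite pow_O, Rmult_1_r. now split.
Qed.

Lemma taylor2_bound (g g3 : R -> R) a r M :
  (forall x, Rabs (x - a) <= r ->
     is_derive g x (Derive g x) /\ is_derive (Derive g) x (Derive (Derive g) x) /\
     is_derive (Derive (Derive g)) x (g3 x) /\ Rabs (g3 x) <= M) ->
  forall d, Rabs d <= r ->
  Rabs (g (a + d) - g a - d * Derive g a - d ^ 2 / 2 * Derive (Derive g) a)
    <= M * Rabs d ^ 3.
Proof.
  intros Hg d Hd.
  assert (Ha : Rabs (a - a) <= r) by (rewrite Rminus_diag, Rabs_R0; generalize (Rabs_pos d); lra).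
  assert (HM : 0 <= M)
    by (destruct (Hg a Ha) as (_ & _ & _ & H); generalize (Rabs_pos (g3 a)); lra).
  assert (H1 := taylor1_bound (Derive g) g3 a r M
                  ltac:(intros x Hx; destruct (Hg x Hx) as (_ & ? & ? & ?); auto)).
  assert (H0 := mvt_pow_bound
                  (fun y => g y - (y - a) * Derive g a - (y - a) ^ 2 / 2 * Derive (Derive g) a)
                  (fun y => Derive g y - Derive g a - (y - a) * Derive (Derive g) a) a r M 2 HM).
  remember (a + d) as y eqn:Hy. replace d with (y - a) in * by lra.
  replace (g y - g a - (y - a) * Derive g a - (y - a) ^ 2 / 2 * Derive (Derive g) a)
    with (g y - (y - a) * Derive g a - (y - a) ^ 2 / 2 * Derive (Derive g) a
          - (g a - (a - a) * Derive g a - (a - a) ^ 2 / 2 * Derive (Derive g) a)) by field.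
  apply H0; auto.
  intros x Hx. split.
  - now apply is_derive_sub_quadratic, Hg.
  - rewrite pow2_abs. replace x with (a + (x - a)) at 1 by ring. now apply H1.
Qed.

(** * Hyperbolic inequalities *)

Lemma exp_le_mono x y : x <= y -> exp x <= exp y.
Proof. intros [Hxy | <-]; [now left; apply exp_increasing | now right]. Qed.

Lemma cosh_sqr t : cosh t ^ 2 = 1 + sinh t ^ 2.
Proof. unfold cosh, sinh. rewrite exp_Ropp. generalize (exp_pos t). intros. field. lra. Qed.

Lemma cosh_sub_sinh t : cosh t - sinh t = exp (- t).
Proof. unfold cosh, sinh. field. Qed.

Lemma cosh_pos t : 0 < cosh t.
Proof. unfold cosh. generalize (exp_pos t) (exp_pos (- t)). lra. Qed.

Lemma cosh_ge_1 t : 1 <= cosh t.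
Proof. generalize (cosh_sqr t) (pow2_ge_0 (sinh t)) (cosh_pos t). nra. Qed.

Lemma sinh_lt_cosh t : sinh t < cosh t.
Proof. generalize (cosh_sub_sinh t) (exp_pos (- t)). lra. Qed.

Lemma sinh_pos t : 0 < t -> 0 < sinh t.
Proof. intros Ht. rewrite <- sinh_0. now apply sinh_lt. Qed.

Lemma sinh_nonneg t : 0 <= t -> 0 <= sinh t.
Proof. intros [Ht | <-]; [now left; apply sinh_pos | rewrite sinh_0; lra]. Qed.

Lemma exp_le_2_cosh t : exp t <= 2 * cosh t.
Proof. unfold cosh. generalize (exp_pos (- t)). lra. Qed.

Lemma cosh_le_exp t : 0 <= t -> cosh t <= exp t.
Proof. intros Ht. unfold cosh. generalize (exp_le_mono (- t) t ltac:(lra)). lra. Qed.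

Lemma cosh_le_3 t : 0 <= t <= 1 -> cosh t <= 3.
Proof.
  intros Ht. generalize (cosh_le_exp t ltac:(lra)) (exp_le_mono t 1 ltac:(lra)) exp_le_3. lra.
Qed.

Lemma sinh_ge_half_cosh t : 1 <= t -> cosh t / 2 <= sinh t.
Proof.
  intros Ht. generalize (cosh_sub_sinh t) (cosh_ge_1 t). rewrite exp_Ropp. intros Hcs Hc.
  assert (He : 2 < exp t) by (generalize (exp_ineq1 t ltac:(lra)); lra).
  assert (/ exp t < / 2) by (apply Rinv_lt_contravar; lra).
  lra.
Qed.

(* [auto_derive] states equations in [R_AbsRing], which [field] does not recognize. *)
Ltac R_eq := match goal with |- ?a = ?b => change (@eq R a b) end.

Ltac derive_field := auto_derive; [repeat split; try exact I | R_eq; field].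

Ltac at_zero :=
  cbv beta; rewrite ?sinh_0, ?cosh_0; field.

Lemma sinh_ge_id t : 0 <= t -> t <= sinh t.
Proof.
  intros Ht. enough (0 <= sinh t - t) by lra.
  apply (nonneg_of_is_derive_nonneg (fun x => sinh x - x) (fun x => cosh x - 1));
    [auto | at_zero | intros x _; derive_field | intros x _].
  generalize (cosh_ge_1 x). lra.
Qed.

Lemma sinh_le_mul_cosh t : 0 <= t -> sinh t <= t * cosh t.
Proof.
  intros Ht. enough (0 <= t * cosh t - sinh t) by lra.
  apply (nonneg_of_is_derive_nonneg (fun x => x * cosh x - sinh x) (fun x => x * sinh x));
    [auto | at_zero | intros x _; derive_field | intros x Hx; cbv beta].
  apply Rmult_le_pos, sinh_nonneg; lra.
Qed.

Lemma sinh_le_3_mul t : 0 <= t <= 1 -> sinh t <= 3 * t.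
Proof. intros Ht. generalize (sinh_le_mul_cosh t ltac:(lra)) (cosh_le_3 t Ht). nra. Qed.

Definition theta_num t := t * cosh t - sinh t.
Definition theta_der_num t := sinh t * cosh t - t.
Definition djj_num t := t * (cosh t ^ 2 + sinh t ^ 2) - sinh t * cosh t.

Lemma theta_der_num_ge t : 0 <= t -> 2 * t ^ 3 / 3 <= theta_der_num t.
Proof.
  intros Ht. enough (0 <= sinh t * cosh t - t - 2 * t ^ 3 / 3) by (unfold theta_der_num; lra).
  apply (nonneg_of_is_derive_nonneg (fun x => sinh x * cosh x - x - 2 * x ^ 3 / 3)
           (fun x => cosh x ^ 2 + sinh x ^ 2 - 1 - 2 * x ^ 2));
    [auto | at_zero | intros x _; derive_field | intros x Hx; cbv beta].
  rewrite cosh_sqr. generalize (sinh_ge_id x ltac:(lra)). nra.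
Qed.

Lemma theta_der_num_pos t : 0 < t -> 0 < theta_der_num t.
Proof. intros Ht. generalize (theta_der_num_ge t ltac:(lra)) (pow_lt t 3 Ht). lra. Qed.

Lemma theta_num_ge t : 0 <= t -> t ^ 3 / 3 <= theta_num t.
Proof.
  intros Ht. enough (0 <= t * cosh t - sinh t - t ^ 3 / 3) by (unfold theta_num; lra).
  apply (nonneg_of_is_derive_nonneg (fun x => x * cosh x - sinh x - x ^ 3 / 3)
           (fun x => x * (sinh x - x)));
    [auto | at_zero | intros x _; derive_field | intros x Hx; cbv beta].
  generalize (sinh_ge_id x ltac:(lra)). nra.
Qed.

Lemma theta_num_pos t : 0 < t -> 0 < theta_num t.
Proof. intros Ht. generalize (theta_num_ge t ltac:(lra)) (pow_lt t 3 Ht). lra. Qed.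

Lemma theta_num_le t : 0 <= t -> theta_num t <= t ^ 3 * cosh t / 3.
Proof.
  intros Ht. enough (0 <= t ^ 3 * cosh t / 3 - (t * cosh t - sinh t)) by (unfold theta_num; lra).
  apply (nonneg_of_is_derive_nonneg (fun x => x ^ 3 * cosh x / 3 - (x * cosh x - sinh x))
           (fun x => x * (x * cosh x - sinh x) + x ^ 3 * sinh x / 3));
    [auto | at_zero | intros x _; derive_field | intros x Hx; cbv beta].
  generalize (sinh_le_mul_cosh x ltac:(lra)) (sinh_nonneg x ltac:(lra)) (pow_le x 3 ltac:(lra)).
  nra.
Qed.

Lemma djj_num_nonneg t : 0 <= t -> 0 <= djj_num t.
Proof.
  intros Ht.
  apply (nonneg_of_is_derive_nonneg djj_num (fun x => 4 * x * sinh x * cosh x));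
    [auto | unfold djj_num; at_zero
    | intros x _; unfold djj_num; derive_field | intros x Hx; cbv beta].
  generalize (cosh_pos x). assert (0 <= x * sinh x) by (apply Rmult_le_pos, sinh_nonneg; lra).
  nra.
Qed.

Lemma djj_num_le_small t : 0 <= t <= 1 -> djj_num t <= 12 * t ^ 3.
Proof.
  intros Ht. enough (0 <= 12 * t ^ 3 - djj_num t) by lra.
  apply (nonneg_of_is_derive_nonneg (fun x => 12 * x ^ 3 - djj_num x)
           (fun x => 4 * x * (9 * x - sinh x * cosh x)));
    [lra | unfold djj_num; at_zero
    | intros x _; unfold djj_num; derive_field | intros x Hx; cbv beta].
  assert (sinh x * cosh x <= 9 * x).
  { generalize (sinh_nonneg x ltac:(lra)) (sinh_le_3_mul x ltac:(lra)) (cosh_le_3 x ltac:(lra))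
      (cosh_pos x). nra. }
  nra.
Qed.

Lemma djj_num_le t : 0 <= t -> djj_num t <= 2 * t * cosh t ^ 2.
Proof.
  intros Ht. unfold djj_num.
  generalize (sinh_nonneg t Ht) (sinh_lt_cosh t) (cosh_pos t). intros.
  assert (t * sinh t ^ 2 <= t * cosh t ^ 2) by (apply Rmult_le_compat_l; nra).
  nra.
Qed.

Lemma theta_der_num_ge_large t : 1 <= t -> cosh t ^ 2 / 5 <= theta_der_num t.
Proof.
  intros Ht. generalize (theta_der_num_ge t ltac:(lra)) (sinh_ge_half_cosh t Ht) (cosh_pos t).
  unfold theta_der_num. nra.
Qed.

(** * The parametrization theta = t coth t - 1 *)

Definition theta_of t := t * cosh t / sinh t - 1.
Definition theta_der t := theta_der_num t / sinh t ^ 2.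

Lemma theta_of_eq t : 0 < t -> theta_of t = theta_num t / sinh t.
Proof.
  intros Ht. unfold theta_of, theta_num. generalize (sinh_pos t Ht). intros. field. lra.
Qed.

Lemma theta_of_pos t : 0 < t -> 0 < theta_of t.
Proof.
  intros Ht. rewrite theta_of_eq by auto.
  apply Rdiv_lt_0_compat; [apply theta_num_pos | apply sinh_pos]; auto.
Qed.

Lemma theta_of_le t : 0 < t -> theta_of t <= t.
Proof.
  intros Ht. rewrite theta_of_eq by auto. unfold theta_num.
  generalize (sinh_pos t Ht) (sinh_ge_id t ltac:(lra)) (cosh_sub_sinh t)
    (exp_le_mono (- t) 0 ltac:(lra)). rewrite exp_0. intros.
  apply Rle_div_l; nra.
Qed.

Lemma theta_of_ge t : 0 < t -> t - 1 <= theta_of t.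
Proof.
  intros Ht. unfold theta_of. generalize (sinh_pos t Ht) (sinh_lt_cosh t). intros.
  enough (t <= t * cosh t / sinh t) by lra.
  apply Rle_div_r; nra.
Qed.

Lemma theta_der_pos t : 0 < t -> 0 < theta_der t.
Proof.
  intros Ht. apply Rdiv_lt_0_compat; [apply theta_der_num_pos | apply pow_lt, sinh_pos]; auto.
Qed.

Lemma is_derive_theta_of t : 0 < t -> is_derive theta_of t (theta_der t).
Proof.
  intros Ht. generalize (sinh_pos t Ht). intros.
  unfold theta_of, theta_der, theta_der_num. auto_derive.
  - lra.
  - R_eq. field_simplify; [rewrite cosh_sqr; field |..]; lra.
Qed.

Lemma theta_of_lt a b : 0 < a -> a < b -> theta_of a < theta_of b.
Proof.
  intros Ha Hab.
  apply (incr_function theta_of (Finite 0) p_infty theta_der); simpl; auto.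
  - intros x Hx _. now apply is_derive_theta_of.
  - intros x Hx _. now apply theta_der_pos.
Qed.

Lemma theta_of_surj y : 0 < y -> exists t, 0 < t /\ theta_of t = y.
Proof.
  intros Hy.
  destruct (IVT_interv (fun t => theta_of t - y) (y / 2) (y + 2)) as [t [Ht Heq]].
  - intros a Ha. apply continuity_pt_minus; [|apply continuity_pt_const; intros ? ?; auto].
    apply (continuity_pt_of_is_derive _ _ (theta_der a)), is_derive_theta_of. lra.
  - lra.
  - generalize (theta_of_le (y / 2) ltac:(lra)). lra.
  - generalize (theta_of_ge (y + 2) ltac:(lra)). lra.
  - exists t. split; lra.
Qed.

Definition lam_of t := / (4 * cosh t ^ 2).

Lemma lam_of_pos t : 0 < lam_of t.
Proof. apply Rinv_0_lt_compat. generalize (cosh_pos t). nra. Qed.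

Lemma one_sub_4_lam_of t : 1 - 4 * lam_of t = tanh t ^ 2.
Proof.
  unfold lam_of, tanh. generalize (cosh_sqr t) (cosh_pos t). intros Hsq Hc.
  replace ((sinh t / cosh t) ^ 2) with (sinh t ^ 2 / cosh t ^ 2) by (field; lra).
  rewrite Hsq. field. nra.
Qed.

Lemma artanh_tanh t : artanh (tanh t) = t.
Proof.
  unfold artanh.
  replace ((1 + tanh t) / (1 - tanh t)) with (exp (t + t)).
  - rewrite ln_exp. field.
  - unfold tanh, sinh, cosh. rewrite exp_plus, exp_Ropp.
    generalize (exp_pos t). intros. field. split; nra.
Qed.

Lemma tanh_artanh s : 0 < s < 1 -> tanh (artanh s) = s.
Proof.
  intros Hs. unfold artanh, tanh, sinh, cosh. rewrite exp_Ropp.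
  set (q := (1 + s) / (1 - s)).
  assert (Hq : 0 < q) by (apply Rdiv_lt_0_compat; lra).
  set (e := exp (/ 2 * ln q)).
  assert (He2 : e * e = q).
  { unfold e. rewrite <- exp_plus. replace (/ 2 * ln q + / 2 * ln q) with (ln q) by field.
    now apply exp_ln. }
  assert (He : 0 < e) by apply exp_pos.
  replace ((e - / e) / 2 / ((e + / e) / 2)) with ((e * e - 1) / (e * e + 1)) by (field; nra).
  rewrite He2. unfold q. field. lra.
Qed.

Lemma lam_spec_lam_of t : 0 < t -> lam_spec (theta_of t) (lam_of t).
Proof.
  intros Ht. generalize (sinh_pos t Ht) (cosh_pos t) (sinh_lt_cosh t). intros Hs Hc Hsc.
  assert (Htanh : 0 < tanh t < 1).
  { unfold tanh. split; [now apply Rdiv_lt_0_compat | apply Rlt_div_l; lra]. }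
  split.
  - generalize (lam_of_pos t) (one_sub_4_lam_of t) (pow_lt _ 2 (proj1 Htanh)). lra.
  - rewrite one_sub_4_lam_of, sqrt_pow2, artanh_tanh by lra.
    unfold theta_of, tanh. field. lra.
Qed.

Lemma lam_spec_lam y : 0 < y -> lam_spec y (lam y).
Proof.
  intros Hy. unfold lam. destruct (Rle_dec y 0); [lra|].
  apply epsilon_spec. destruct (theta_of_surj y Hy) as [t [Ht <-]].
  exists (lam_of t). now apply lam_spec_lam_of.
Qed.

Definition t_of y := artanh (sqrt (1 - 4 * lam y)).

Lemma t_of_spec y : 0 < y ->
  0 < t_of y /\ theta_of (t_of y) = y /\ lam y = lam_of (t_of y).
Proof.
  intros Hy. destruct (lam_spec_lam y Hy) as [Hl Heq].
  fold (t_of y) in Heq. set (s := sqrt (1 - 4 * lam y)) in *.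
  assert (Hs2 : s ^ 2 = 1 - 4 * lam y) by (apply pow2_sqrt; lra).
  assert (Hs : 0 < s < 1) by (split; [apply sqrt_lt_R0 | ]; nra).
  assert (Htanh : tanh (t_of y) = s) by now apply tanh_artanh.
  assert (Ht : t_of y = (y + 1) * s).
  { replace (t_of y) with (t_of y / s * s) at 1 by (field; lra).
    replace (t_of y / s) with (y + 1) by lra. ring. }
  repeat split.
  - rewrite Ht. nra.
  - unfold theta_of.
    replace (t_of y * cosh (t_of y) / sinh (t_of y)) with (t_of y / tanh (t_of y)).
    + rewrite Htanh, Ht. field. lra.
    + unfold tanh. generalize (cosh_pos (t_of y)) (sinh_pos (t_of y) ltac:(nra)). intros.
      field. lra.
  - generalize (one_sub_4_lam_of (t_of y)). rewrite Htanh. lra.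
Qed.

Lemma t_of_pos y : 0 < y -> 0 < t_of y.
Proof. apply t_of_spec. Qed.

Lemma theta_of_t_of y : 0 < y -> theta_of (t_of y) = y.
Proof. apply t_of_spec. Qed.

Lemma lam_eq_lam_of y : 0 < y -> lam y = lam_of (t_of y).
Proof. apply t_of_spec. Qed.

Lemma t_of_ge y : 0 < y -> y <= t_of y.
Proof.
  intros Hy. rewrite <- (theta_of_t_of y Hy) at 1. now apply theta_of_le, t_of_pos.
Qed.

Lemma t_of_bounds lb ub y : 0 < lb -> 0 < ub ->
  theta_of lb <= y <= theta_of ub -> lb <= t_of y <= ub.
Proof.
  intros Hlb Hub Hy. assert (Hy0 : 0 < y) by (generalize (theta_of_pos lb Hlb); lra).
  generalize (t_of_pos y Hy0) (theta_of_t_of y Hy0). intros Ht Hth.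
  split; apply Rnot_lt_le; intros Hlt.
  - generalize (theta_of_lt _ _ Ht Hlt). lra.
  - generalize (theta_of_lt _ _ Hub Hlt). lra.
Qed.

Lemma t_of_le a b : 0 < a -> a <= b -> t_of a <= t_of b.
Proof.
  intros Ha Hab. apply (t_of_bounds (t_of a) (t_of b)); [apply t_of_pos; lra..|].
  rewrite !theta_of_t_of; lra.
Qed.

Lemma continuity_t_of y : 0 < y -> continuity_pt t_of y.
Proof.
  intros Hy. set (t := t_of y).
  assert (Ht : 0 < t) by now apply t_of_pos.
  assert (Hlb : 0 < t / 2) by lra.
  apply (continuity_pt_recip_interv theta_of t_of (t / 2) (t + 1)).
  - lra.
  - intros a b Ha Hab _. apply theta_of_lt; lra.
  - intros x Hx _. unfold comp, id. apply theta_of_t_of. generalize (theta_of_pos _ Hlb). lra.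
  - intros x Hx1 Hx2. apply t_of_bounds; auto; lra.
  - intros a Ha. apply (continuity_pt_of_is_derive _ _ (theta_der a)), is_derive_theta_of. lra.
  - rewrite <- (theta_of_t_of y Hy). fold t. split; apply theta_of_lt; lra.
Qed.

Lemma is_derive_t_of y : 0 < y -> is_derive t_of y (/ theta_der (t_of y)).
Proof.
  intros Hy.
  assert (Hder : forall a, t_of (y / 2) <= a <= t_of (2 * y) -> derivable_pt theta_of a).
  { intros a Ha. apply ex_derive_Reals_0. exists (theta_der a).
    apply is_derive_theta_of. generalize (t_of_pos (y / 2) ltac:(lra)). lra. }
  assert (Hmono : t_of (y / 2) <= t_of y <= t_of (2 * y)) by (split; apply t_of_le; lra).
  assert (Hval : forall pr, derive_pt theta_of (t_of y) pr = theta_der (t_of y)).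
  { intros pr. apply derive_pt_eq_0, is_derive_Reals, is_derive_theta_of, t_of_pos, Hy. }
  assert (Hpos := theta_der_pos _ (t_of_pos y Hy)).
  apply is_derive_Reals.
  replace (/ theta_der (t_of y)) with (1 / derive_pt theta_of (t_of y) (Hder (t_of y) Hmono))
    by (rewrite Hval; field; lra).
  apply (derivable_pt_lim_recip_interv theta_of t_of); try lra.
  - now apply continuity_t_of.
  - intros x Hx. unfold comp, id. apply theta_of_t_of. lra.
  - rewrite Hval. lra.
Qed.

Lemma is_derive_comp_t_of (F G : R -> R) y : 0 < y ->
  (forall t, 0 < t -> is_derive F t (G t * theta_der t)) ->
  is_derive (fun x => F (t_of x)) y (G (t_of y)).
Proof.
  intros Hy HF. assert (Ht := t_of_pos y Hy).
  assert (H := is_derive_comp F t_of y _ _ (HF _ Ht) (is_derive_t_of y Hy)).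
  generalize (theta_der_pos _ Ht). intros Hpos.
  replace (G (t_of y)) with (scal (/ theta_der (t_of y)) (G (t_of y) * theta_der (t_of y))).
  - exact H.
  - unfold scal; simpl; unfold mult; simpl. field. lra.
Qed.

(* The logarithms are split into [ln sinh] and [ln cosh] so that both sides of the
   derivative identities below contain the same logarithmic atoms. *)
Definition ff_t t :=
  ln 4 + 2 * ln (cosh t) - 2 * theta_of t - 2 * theta_of t * (ln (sinh t) - ln (cosh t)).
Definition dff_t t := - 2 * (ln (sinh t) - ln (cosh t)).
Definition d2ff_t t := - 2 * sinh t / (cosh t * theta_der_num t).
Definition d3ff_t t :=
  - 2 * sinh t ^ 2 * (theta_der_num t - 2 * sinh t ^ 3 * cosh t)
  / (cosh t ^ 2 * theta_der_num t ^ 3).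

Definition jj_t t := - / 2 * (ln (theta_der_num t) - ln (sinh t) - ln (cosh t)) + / 2 * ln 2.
Definition djj_t t := - sinh t * djj_num t / (2 * cosh t * theta_der_num t ^ 2).
Definition d2jj_t t :=
  - sinh t ^ 2 * djj_num t / (2 * cosh t ^ 2 * theta_der_num t ^ 3)
  - 2 * t * sinh t ^ 4 / theta_der_num t ^ 3
  + 2 * sinh t ^ 5 * djj_num t / (cosh t * theta_der_num t ^ 4).

Lemma ff_eq_ff_t y : 0 < y -> ff y = ff_t (t_of y).
Proof.
  intros Hy. unfold ff, ff_t.
  rewrite (lam_eq_lam_of y Hy), one_sub_4_lam_of.
  set (t := t_of y). rewrite <- (theta_of_t_of y Hy). fold t.
  generalize (sinh_pos t (t_of_pos y Hy)) (cosh_pos t). intros Hs Hc.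
  unfold lam_of, tanh.
  rewrite ln_Rinv, ln_mult by nra.
  assert (Hsc : 0 < sinh t / cosh t) by now apply Rdiv_lt_0_compat.
  rewrite (ln_pow (cosh t)), (ln_pow (sinh t / cosh t)), ln_div by assumption.
  simpl INR. ring.
Qed.

Lemma jj_eq_jj_t y : 0 < y -> jj y = jj_t (t_of y).
Proof.
  intros Hy. unfold jj, jj_t.
  rewrite (lam_eq_lam_of y Hy).
  set (t := t_of y). rewrite <- (theta_of_t_of y Hy). fold t.
  assert (Ht : 0 < t) by now apply t_of_pos.
  generalize (sinh_pos t Ht) (cosh_pos t) (theta_der_num_pos t Ht). intros Hs Hc Hd.
  replace (1 - 4 * (theta_of t + 1) * lam_of t) with (theta_der_num t / (sinh t * cosh t))
    by (unfold theta_of, theta_der_num, lam_of; field; lra).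
  rewrite ln_div, ln_mult by nra. ring.
Qed.

Lemma theta_der_num_exp_pos t : 0 < t -> 0 < exp t ^ 4 - 1 - 4 * t * exp t ^ 2.
Proof.
  intros Ht. generalize (theta_der_num_pos t Ht) (exp_pos t). intros Hd He.
  replace (exp t ^ 4 - 1 - 4 * t * exp t ^ 2) with (4 * exp t ^ 2 * theta_der_num t).
  - apply Rmult_lt_0_compat; [nra | exact Hd].
  - unfold theta_der_num, sinh, cosh. rewrite exp_Ropp. field. lra.
Qed.

(* Matching syntactically keeps [apply] from unfolding [cosh] into [exp]. *)
Ltac pos_factors :=
  match goal with
  | |- 0 < _ * _ => apply Rmult_lt_0_compat; pos_factors
  | |- _ => lra
  end.

(* Each identity holds only modulo cosh^2 = 1 + sinh^2; rewriting [sinh] and [cosh]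
   through [exp] turns it into a rational identity in [exp t] and [t]. *)
Ltac hyp_derive t Ht :=
  pose proof (sinh_pos t Ht); pose proof (cosh_pos t); pose proof (theta_der_num_pos t Ht);
  pose proof (exp_ineq1 t ltac:(lra));
  pose proof (theta_der_num_exp_pos t Ht);
  unfold ff_t, dff_t, d2ff_t, d3ff_t, jj_t, djj_t, d2jj_t, djj_num, theta_der, theta_of,
    theta_der_num in *;
  auto_derive;
  [ repeat split; try exact I; try assumption; try (apply Rgt_not_eq; unfold Rgt; pos_factors)
  | unfold sinh, cosh in *; rewrite ?exp_Ropp in *; R_eq;
    field; repeat split; intro; nra ].

Lemma is_derive_ff_t t : 0 < t -> is_derive ff_t t (dff_t t * theta_der t).
Proof. intros Ht. hyp_derive t Ht. Qed.

Lemma is_derive_dff_t t : 0 < t -> is_derive dff_t t (d2ff_t t * theta_der t).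
Proof. intros Ht. hyp_derive t Ht. Qed.

Lemma is_derive_d2ff_t t : 0 < t -> is_derive d2ff_t t (d3ff_t t * theta_der t).
Proof. intros Ht. hyp_derive t Ht. Qed.

Lemma is_derive_jj_t t : 0 < t -> is_derive jj_t t (djj_t t * theta_der t).
Proof. intros Ht. hyp_derive t Ht. Qed.

Lemma is_derive_djj_t t : 0 < t -> is_derive djj_t t (d2jj_t t * theta_der t).
Proof. intros Ht. hyp_derive t Ht. Qed.

Lemma ff_derivatives x : 0 < x ->
  is_derive ff x (Derive ff x) /\
  is_derive (Derive ff) x (Derive (Derive ff) x) /\
  is_derive (Derive (Derive ff)) x (d3ff_t (t_of x)).
Proof.
  assert (H1 : forall y, 0 < y -> is_derive ff y (dff_t (t_of y))).
  { intros y Hy. apply (is_derive_ext_pos (fun z => ff_t (t_of z))); auto.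
    - intros z Hz. symmetry. now apply ff_eq_ff_t.
    - apply is_derive_comp_t_of; auto using is_derive_ff_t. }
  assert (H2 : forall y, 0 < y -> is_derive (Derive ff) y (d2ff_t (t_of y))).
  { intros y Hy. apply (is_derive_Derive_pos _ _ _ _ Hy H1).
    apply is_derive_comp_t_of; auto using is_derive_dff_t. }
  assert (H3 : forall y, 0 < y -> is_derive (Derive (Derive ff)) y (d3ff_t (t_of y))).
  { intros y Hy. apply (is_derive_Derive_pos _ _ _ _ Hy H2).
    apply is_derive_comp_t_of; auto using is_derive_d2ff_t. }
  intros Hx. split; [|split].
  - apply Derive_correct. exists (dff_t (t_of x)). auto.
  - apply Derive_correct. exists (d2ff_t (t_of x)). auto.
  - auto.
Qed.

Lemma jj_derivatives x : 0 < x ->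
  is_derive jj x (Derive jj x) /\ is_derive (Derive jj) x (d2jj_t (t_of x)).
Proof.
  assert (H1 : forall y, 0 < y -> is_derive jj y (djj_t (t_of y))).
  { intros y Hy. apply (is_derive_ext_pos (fun z => jj_t (t_of z))); auto.
    - intros z Hz. symmetry. now apply jj_eq_jj_t.
    - apply is_derive_comp_t_of; auto using is_derive_jj_t. }
  intros Hx. split.
  - apply Derive_correct. exists (djj_t (t_of x)). auto.
  - apply (is_derive_Derive_pos _ _ _ _ Hx H1).
    apply is_derive_comp_t_of; auto using is_derive_djj_t.
Qed.

(** * Decay of the third derivative of f and the second of j *)

(* theta^2 f''' and theta^2 j'' are bounded by polynomials in the four ratios below,
   which are bounded for t <= 1 and grow at most linearly for t >= 1, the first one
   even like t / cosh t. *)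
Lemma ratios_nonneg t : 0 < t ->
  0 <= theta_num t / theta_der_num t /\
  0 <= sinh t ^ 3 / (cosh t * theta_der_num t) /\
  0 <= djj_num t / theta_der_num t /\
  0 <= t * sinh t ^ 2 / theta_der_num t.
Proof.
  intros Ht.
  generalize (theta_num_pos t Ht) (sinh_pos t Ht) (cosh_pos t) (theta_der_num_pos t Ht)
    (djj_num_nonneg t ltac:(lra)). intros HN Hs Hc HD HP.
  repeat split; apply Rdiv_le_0_compat; try apply Rmult_lt_0_compat; try lra.
  - apply pow_le. lra.
  - apply Rmult_le_pos; [lra | apply pow2_ge_0].
Qed.

Lemma ratios_small t : 0 < t <= 1 ->
  theta_num t / theta_der_num t <= 3 / 2 /\
  sinh t ^ 3 / (cosh t * theta_der_num t) <= 81 / 2 /\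
  djj_num t / theta_der_num t <= 18 /\
  t * sinh t ^ 2 / theta_der_num t <= 27 / 2.
Proof.
  intros Ht.
  generalize (theta_der_num_ge t ltac:(lra)) (theta_num_le t ltac:(lra)) (cosh_le_3 t ltac:(lra))
    (cosh_ge_1 t) (djj_num_le_small t ltac:(lra)) (sinh_nonneg t ltac:(lra))
    (sinh_le_3_mul t ltac:(lra)) (pow_lt t 3 ltac:(lra)).
  intros HD HN Hc3 Hc1 HP Hs0 Hs3 Ht3.
  assert (Hsc : sinh t ^ 3 <= (3 * t) ^ 3) by (apply pow_incr; lra).
  assert (Hs2 : sinh t ^ 2 <= (3 * t) ^ 2) by (apply pow_incr; lra).
  repeat split; apply Rle_div_l; try apply Rmult_lt_0_compat; try lra; nra.
Qed.

Lemma ratios_large t : 1 <= t ->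
  theta_num t / theta_der_num t * cosh t <= 5 * t /\
  sinh t ^ 3 / (cosh t * theta_der_num t) <= 5 /\
  djj_num t / theta_der_num t <= 10 * t /\
  t * sinh t ^ 2 / theta_der_num t <= 5 * t.
Proof.
  intros Ht.
  generalize (theta_der_num_ge_large t Ht) (cosh_pos t) (sinh_nonneg t ltac:(lra))
    (sinh_lt_cosh t) (djj_num_le t ltac:(lra)). intros HD Hc Hs0 Hsc HP.
  assert (HDpos : 0 < theta_der_num t) by nra.
  assert (Hs2 : sinh t ^ 2 <= cosh t ^ 2) by (apply pow_incr; lra).
  assert (Hs3 : sinh t ^ 3 <= cosh t ^ 3) by (apply pow_incr; lra).
  repeat split.
  - replace (theta_num t / theta_der_num t * cosh t)
      with (theta_num t * cosh t / theta_der_num t) by (field; lra).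
    apply Rle_div_l; [lra|]. unfold theta_num. nra.
  - apply Rle_div_l; [apply Rmult_lt_0_compat; lra|]. nra.
  - apply Rle_div_l; [lra|]. nra.
  - apply Rle_div_l; [lra|]. nra.
Qed.

Lemma d3ff_t_theta_sq_le t : 0 < t ->
  Rabs (d3ff_t t) * theta_of t ^ 2 <=
  2 * (theta_num t / theta_der_num t) ^ 2
    * (1 + 2 * (sinh t ^ 3 / (cosh t * theta_der_num t))).
Proof.
  intros Ht. destruct (ratios_nonneg t Ht) as (_ & Hq & _).
  generalize (sinh_pos t Ht) (cosh_ge_1 t) (theta_der_num_pos t Ht). intros Hs Hc HD.
  set (r := theta_num t / theta_der_num t) in *.
  set (q := sinh t ^ 3 / (cosh t * theta_der_num t)) in *.
  assert (Hid : d3ff_t t * theta_of t ^ 2 = - 2 * r ^ 2 * (/ cosh t ^ 2 - 2 * q)).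
  { rewrite theta_of_eq by auto. unfold d3ff_t, r, q. field. lra. }
  assert (Hinv : 0 < / cosh t ^ 2 <= 1).
  { split; [apply Rinv_0_lt_compat; nra | rewrite <- Rinv_1; apply Rinv_le_contravar; nra]. }
  rewrite <- (Rabs_pos_eq (theta_of t ^ 2)) by apply pow2_ge_0.
  rewrite <- Rabs_mult, Hid. apply Rabs_le.
  assert (0 <= r ^ 2) by apply pow2_ge_0.
  set (u := / cosh t ^ 2) in *. clearbody r q u.
  assert (0 <= r ^ 2 * (1 - u + 4 * q)) by (apply Rmult_le_pos; lra).
  assert (0 <= r ^ 2 * (1 + u)) by (apply Rmult_le_pos; lra).
  split; lra.
Qed.

Lemma d2jj_t_theta_sq_le t : 0 < t ->
  Rabs (d2jj_t t) * theta_of t ^ 2 <=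
  (theta_num t / theta_der_num t) ^ 2
    * (djj_num t / theta_der_num t / 2 + 2 * (t * sinh t ^ 2 / theta_der_num t)
       + 2 * (sinh t ^ 3 / (cosh t * theta_der_num t)) * (djj_num t / theta_der_num t)).
Proof.
  intros Ht. destruct (ratios_nonneg t Ht) as (_ & Hq & Hp & Hw).
  generalize (sinh_pos t Ht) (cosh_ge_1 t) (theta_der_num_pos t Ht). intros Hs Hc HD.
  set (r := theta_num t / theta_der_num t) in *.
  set (q := sinh t ^ 3 / (cosh t * theta_der_num t)) in *.
  set (p := djj_num t / theta_der_num t) in *.
  set (w := t * sinh t ^ 2 / theta_der_num t) in *.
  assert (Hid : d2jj_t t * theta_of t ^ 2 = r ^ 2 * (- p / (2 * cosh t ^ 2) - 2 * w + 2 * q * p)).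
  { rewrite theta_of_eq by auto. unfold d2jj_t, r, q, p, w. field. lra. }
  assert (Hp2 : 0 <= p / (2 * cosh t ^ 2) <= p / 2).
  { split; [apply Rdiv_le_0_compat; nra | apply Rmult_le_compat_l; [lra|]].
    apply Rinv_le_contravar; nra. }
  rewrite <- (Rabs_pos_eq (theta_of t ^ 2)) by apply pow2_ge_0.
  rewrite <- Rabs_mult, Hid. apply Rabs_le.
  assert (0 <= r ^ 2) by apply pow2_ge_0.
  set (u := p / (2 * cosh t ^ 2)) in *.
  replace (- p / (2 * cosh t ^ 2)) with (- u) by (unfold u; field; lra).
  clearbody r q p w u.
  assert (0 <= r ^ 2 * (p / 2 - u + 4 * q * p)) by (apply Rmult_le_pos; nra).
  assert (0 <= r ^ 2 * (p / 2 + u + 4 * w)) by (apply Rmult_le_pos; lra).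
  split; lra.
Qed.

Lemma d3ff_t_small t : 0 < t <= 1 -> Rabs (d3ff_t t) * theta_of t ^ 2 <= 369.
Proof.
  intros Ht. eapply Rle_trans; [apply d3ff_t_theta_sq_le; lra|].
  destruct (ratios_nonneg t (proj1 Ht)) as (Hr & Hq & _).
  destruct (ratios_small t Ht) as (Hr' & Hq' & _).
  revert Hr Hq Hr' Hq'.
  generalize (theta_num t / theta_der_num t) (sinh t ^ 3 / (cosh t * theta_der_num t)).
  intros r q Hr Hq Hr' Hq'.
  assert (r ^ 2 <= 9 / 4) by nra. nra.
Qed.

Lemma d3ff_t_large t : 1 <= t -> Rabs (d3ff_t t) * theta_of t ^ 2 * cosh t ^ 2 <= 550 * t ^ 3.
Proof.
  intros Ht. assert (Hc := cosh_pos t).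
  apply Rle_trans with (2 * (theta_num t / theta_der_num t * cosh t) ^ 2
                          * (1 + 2 * (sinh t ^ 3 / (cosh t * theta_der_num t)))).
  { replace (2 * (theta_num t / theta_der_num t * cosh t) ^ 2
               * (1 + 2 * (sinh t ^ 3 / (cosh t * theta_der_num t))))
      with (2 * (theta_num t / theta_der_num t) ^ 2
              * (1 + 2 * (sinh t ^ 3 / (cosh t * theta_der_num t))) * cosh t ^ 2) by ring.
    apply Rmult_le_compat_r; [apply pow2_ge_0 | apply d3ff_t_theta_sq_le; lra]. }
  destruct (ratios_nonneg t ltac:(lra)) as (Hr & Hq & _).
  destruct (ratios_large t Ht) as (Hr' & Hq' & _).
  assert (Hrc : 0 <= theta_num t / theta_der_num t * cosh t) by (apply Rmult_le_pos; lra).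
  revert Hrc Hq Hr' Hq'.
  generalize (theta_num t / theta_der_num t * cosh t) (sinh t ^ 3 / (cosh t * theta_der_num t)).
  intros r q Hr0 Hq Hr' Hq'.
  assert (r ^ 2 <= 25 * t ^ 2) by nra. nra.
Qed.

Lemma d2jj_t_small t : 0 < t <= 1 -> Rabs (d2jj_t t) * theta_of t ^ 2 <= 3362.
Proof.
  intros Ht. eapply Rle_trans; [apply d2jj_t_theta_sq_le; lra|].
  destruct (ratios_nonneg t (proj1 Ht)) as (Hr & Hq & Hp & Hw).
  destruct (ratios_small t Ht) as (Hr' & Hq' & Hp' & Hw').
  revert Hr Hq Hp Hw Hr' Hq' Hp' Hw'.
  generalize (theta_num t / theta_der_num t) (sinh t ^ 3 / (cosh t * theta_der_num t))
    (djj_num t / theta_der_num t) (t * sinh t ^ 2 / theta_der_num t).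
  intros r q p w Hr Hq Hp Hw Hr' Hq' Hp' Hw'.
  assert (r ^ 2 <= 9 / 4) by nra. assert (q * p <= 729) by nra. nra.
Qed.

Lemma d2jj_t_large t : 1 <= t -> Rabs (d2jj_t t) * theta_of t ^ 2 * cosh t ^ 2 <= 2875 * t ^ 3.
Proof.
  intros Ht. assert (Hc := cosh_pos t).
  set (S := djj_num t / theta_der_num t / 2 + 2 * (t * sinh t ^ 2 / theta_der_num t)
            + 2 * (sinh t ^ 3 / (cosh t * theta_der_num t)) * (djj_num t / theta_der_num t)).
  apply Rle_trans with ((theta_num t / theta_der_num t * cosh t) ^ 2 * S).
  { replace ((theta_num t / theta_der_num t * cosh t) ^ 2 * S)
      with ((theta_num t / theta_der_num t) ^ 2 * S * cosh t ^ 2) by ring.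
    apply Rmult_le_compat_r; [apply pow2_ge_0 | apply d2jj_t_theta_sq_le; lra]. }
  destruct (ratios_nonneg t ltac:(lra)) as (Hr & Hq & Hp & Hw).
  destruct (ratios_large t Ht) as (Hr' & Hq' & Hp' & Hw').
  assert (Hrc : 0 <= theta_num t / theta_der_num t * cosh t) by (apply Rmult_le_pos; lra).
  assert (HS : 0 <= S <= 115 * t) by (unfold S; split; nra).
  clearbody S. revert Hrc Hr'.
  generalize (theta_num t / theta_der_num t * cosh t). intros r Hr0 Hr'.
  assert (r ^ 2 <= 25 * t ^ 2) by nra. nra.
Qed.

Lemma exp_le_9 t : t <= 1 -> exp (3 * t / 2) <= 9.
Proof.
  intros Ht. apply Rle_trans with (exp (1 + 1)); [apply exp_le_mono; lra|].
  rewrite exp_plus. generalize exp_le_3 (exp_pos 1). nra.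
Qed.

Lemma cube_mul_exp_le t : 1 <= t -> t ^ 3 * exp (3 * t / 2) <= 16384 * cosh t ^ 2.
Proof.
  intros Ht.
  assert (Hq : exp (t / 2) = exp (t / 8) ^ 4).
  { replace (t / 2) with (t / 8 + t / 8 + t / 8 + t / 8) by field. rewrite !exp_plus. ring. }
  assert (Hcube : t ^ 3 <= 4096 * exp (t / 2)).
  { rewrite Hq. generalize (exp_ineq1_le (t / 8)). intros.
    assert ((t / 8) ^ 4 <= exp (t / 8) ^ 4) by (apply pow_incr; lra).
    assert (t ^ 3 <= t ^ 4) by (simpl; nra). nra. }
  assert (Hsplit : exp (t / 2) * exp (3 * t / 2) = exp t ^ 2).
  { rewrite <- exp_plus. replace (t / 2 + 3 * t / 2) with (t + t) by field.
    rewrite exp_plus. ring. }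
  generalize (exp_le_2_cosh t) (exp_pos t) (exp_pos (3 * t / 2)). intros.
  apply Rle_trans with (4096 * exp (t / 2) * exp (3 * t / 2)); [apply Rmult_le_compat_r; lra|].
  rewrite Rmult_assoc, Hsplit. nra.
Qed.

Lemma exp_weight_bound X t a b : 0 < t -> 0 <= a -> 0 <= b ->
  (t <= 1 -> X <= a) -> (1 <= t -> X * cosh t ^ 2 <= b * t ^ 3) ->
  X * exp (3 * t / 2) <= 9 * a + 16384 * b.
Proof.
  intros Ht Ha Hb Hsmall Hlarge. assert (He := exp_pos (3 * t / 2)).
  destruct (Rle_dec t 1) as [Hle | Hgt].
  - generalize (Hsmall Hle) (exp_le_9 t Hle). nra.
  - assert (H1 : 1 <= t) by lra. assert (Hc := cosh_pos t).
    generalize (Hlarge H1) (cube_mul_exp_le t H1). intros HX Hw.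
    apply Rmult_le_reg_r with (cosh t ^ 2); [nra|].
    apply Rle_trans with (b * t ^ 3 * exp (3 * t / 2)); [|nra].
    replace (X * exp (3 * t / 2) * cosh t ^ 2) with (X * cosh t ^ 2 * exp (3 * t / 2)) by ring.
    apply Rmult_le_compat_r; lra.
Qed.

Lemma d3ff_t_decay : exists K, 0 < K /\
  forall t, 0 < t -> Rabs (d3ff_t t) * theta_of t ^ 2 * exp (3 * t / 2) <= K.
Proof.
  exists (9 * 369 + 16384 * 550). split; [lra|]. intros t Ht.
  apply exp_weight_bound; try lra.
  - intros. apply d3ff_t_small. lra.
  - apply d3ff_t_large.
Qed.

Lemma d2jj_t_decay : exists K, 0 < K /\
  forall t, 0 < t -> Rabs (d2jj_t t) * theta_of t ^ 2 * exp (3 * t / 2) <= K.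
Proof.
  exists (9 * 3362 + 16384 * 2875). split; [lra|]. intros t Ht.
  apply exp_weight_bound; try lra.
  - intros. apply d2jj_t_small. lra.
  - apply d2jj_t_large.
Qed.

Lemma near_theta_ge theta x : Rabs (x - theta) <= theta / 3 -> 2 * theta / 3 <= x.
Proof. intros Hx. apply Rabs_le_between in Hx. lra. Qed.

Lemma decay_at_t_of (Q : R -> R) K theta x : 0 < theta -> Rabs (x - theta) <= theta / 3 ->
  (forall t, 0 < t -> Rabs (Q t) * theta_of t ^ 2 * exp (3 * t / 2) <= K) ->
  Rabs (Q (t_of x)) <= 9 / 4 * K * / theta ^ 2 * exp (- theta).
Proof.
  intros Htheta Hx HK. apply near_theta_ge in Hx. assert (Hx0 : 0 < x) by lra.
  generalize (HK (t_of x) (t_of_pos x Hx0)). rewrite theta_of_t_of by auto. intros H.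
  assert (He : exp theta <= exp (3 * t_of x / 2)).
  { apply exp_le_mono. generalize (t_of_ge x Hx0). lra. }
  assert (Hx2 : 4 * theta ^ 2 / 9 <= x ^ 2) by nra.
  generalize (pow_lt theta 2 Htheta) (exp_pos theta) (Rabs_pos (Q (t_of x))). intros.
  rewrite exp_Ropp.
  apply Rmult_le_reg_r with (theta ^ 2 * exp theta); [nra|].
  replace (9 / 4 * K * / theta ^ 2 * / exp theta * (theta ^ 2 * exp theta)) with (9 / 4 * K)
    by (field; lra).
  assert (Rabs (Q (t_of x)) * (4 * theta ^ 2 / 9) * exp theta <= K).
  { apply Rle_trans with (2 := H). apply Rmult_le_compat; nra. }
  nra.
Qed.

Lemma ff_taylor_estimate K theta delta : 0 < theta -> Rabs delta <= theta / 3 ->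
  (forall t, 0 < t -> Rabs (d3ff_t t) * theta_of t ^ 2 * exp (3 * t / 2) <= K) ->
  Rabs (ff (theta + delta) - ff theta - delta * Derive ff theta
        - delta ^ 2 / 2 * Derive (Derive ff) theta)
    <= 9 / 4 * K * / theta ^ 2 * Rabs delta ^ 3 * exp (- theta).
Proof.
  intros Htheta Hdelta HK.
  replace (9 / 4 * K * / theta ^ 2 * Rabs delta ^ 3 * exp (- theta))
    with (9 / 4 * K * / theta ^ 2 * exp (- theta) * Rabs delta ^ 3) by ring.
  apply (taylor2_bound ff (fun x => d3ff_t (t_of x)) theta (theta / 3)); auto.
  intros x Hx. generalize (near_theta_ge theta x Hx). intros Hx'.
  destruct (ff_derivatives x ltac:(lra)) as (H1 & H2 & H3).
  split; [|split; [|split]]; auto. now apply decay_at_t_of.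
Qed.

Lemma jj_taylor_estimate K theta delta : 0 < theta -> Rabs delta <= theta / 3 ->
  (forall t, 0 < t -> Rabs (d2jj_t t) * theta_of t ^ 2 * exp (3 * t / 2) <= K) ->
  Rabs (jj (theta + delta) - jj theta - delta * Derive jj theta)
    <= 9 / 4 * K * / theta ^ 2 * delta ^ 2 * exp (- theta).
Proof.
  intros Htheta Hdelta HK.
  replace (9 / 4 * K * / theta ^ 2 * delta ^ 2 * exp (- theta))
    with (9 / 4 * K * / theta ^ 2 * exp (- theta) * delta ^ 2) by ring.
  apply (taylor1_bound jj (fun x => d2jj_t (t_of x)) theta (theta / 3)); auto.
  intros x Hx. generalize (near_theta_ge theta x Hx). intros Hx'.
  destruct (jj_derivatives x ltac:(lra)) as (H1 & H2).
  split; [|split]; auto. now apply decay_at_t_of.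
Qed.

Theorem lemma3 :
  exists C : R, 0 < C /\
    forall theta delta : R, 0 < theta -> Rabs delta <= theta / 3 ->
      Rabs (ff (theta + delta) - ff theta - delta * Derive ff theta
            - delta ^ 2 / 2 * Derive (Derive ff) theta)
        <= C * / theta ^ 2 * Rabs delta ^ 3 * exp (- theta)
      /\
      Rabs (jj (theta + delta) - jj theta - delta * Derive jj theta)
        <= C * / theta ^ 2 * delta ^ 2 * exp (- theta).
Proof.
  destruct d3ff_t_decay as [KF [HKF HF]].
  destruct d2jj_t_decay as [KJ [HKJ HJ]].
  exists (9 / 4 * (KF + KJ)). split; [lra|].
  intros theta delta Htheta Hdelta. split.
  - apply ff_taylor_estimate; auto. intros t Ht. specialize (HF t Ht). lra.
  - apply jj_taylor_estimate; auto. intros t Ht. specialize (HJ t Ht). lra.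
Qed.
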